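(* Let $X$ be a continuum and $T\subset X$ a thick subcontinuum. Then every null-aposyndetic point of $X$ lies in the boundary $\overline T\cap\overline{X-T}$ of $T$.
   Context: A continuum is a nondegenerate compact connected Hausdorff space. A subcontinuum $T\subset X$ is thick if $T\neq X$ and $T$ has nonempty interior. A point $x\in X$ is null-aposyndetic if no proper subcontinuum of $X$ contains $x$ in its interior. *)

From mathcomp Require Import all_boot all_order.
From mathcomp Require Import all_classical.
From mathcomp Require Import topology.
Set Implicit Arguments. Unset Strict Implicit. Unset Printing Implicit Defensive.
Local Open Scope classical_set_scope.

Definition nondegenerate {T : Type} (A : set T) : Prop :=
  exists x y, A x /\ A y /\ x <> y.

Definition is_continuum (X : topologicalType) : Prop :=
  [/\ nondegenerate (@setT X), compact (@setT X),
      connected (@setT X) & hausdorff_space X].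

(* A subcontinuum of X: a subset which is a continuum in the subspace
   topology (Hausdorffness is inherited from X). *)
Definition subcontinuum (X : topologicalType) (A : set X) : Prop :=
  [/\ nondegenerate A, compact A & connected A].

Definition thick (X : topologicalType) (T : set X) : Prop :=
  [/\ subcontinuum T, T <> setT & (interior T) !=set0].

Definition null_aposyndetic (X : topologicalType) (x : X) : Prop :=
  forall A : set X, subcontinuum A -> A <> setT -> ~ (interior A) x.

From mathcomp Require Import all_boot all_order all_classical topology.
Set Implicit Arguments. Unset Strict Implicit. Unset Printing Implicit Defensive.
Local Open Scope classical_set_scope.

(* Being null-aposyndetic, x is not interior to the proper subcontinuum T, so
   x lies in the closure Z of ~` T.  Suppose x were outside T; then x is
   interior to Z, while Z misses the interior of T.  If Z is connected, it
   meets T (X is connected) and is itself a proper subcontinuum with x in its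
   interior.  Otherwise split Z into disjoint closed pieces Z1, containing x,
   and Z2 <> set0.  Since X = (T `|` Z1) `|` Z2 and the two closed pieces meet
   only inside the connected set T, the set T `|` Z1 is connected; it is
   proper, and it contains the neighbourhood ~` T `\` Z2 of x.  Either way x
   has a proper subcontinuum neighbourhood. *)

Section closed_partition.
Variable X : topologicalType.
Implicit Types A B C M N P R : set X.

Definition closed_partition M P R :=
  [/\ closed P, closed R, M = P `|` R & P `&` R = set0].

Lemma closed_partitionC M P R :
  closed_partition M P R -> closed_partition M R P.
Proof. by case=> cP cR MPR PR; split=> //; rewrite 1?setUC 1?setIC. Qed.

Lemma closed_partition_disj M P R (p : X) :
  closed_partition M P R -> P p -> R p -> False.
Proof. by case=> _ _ _ PR Pp Rp; have : (P `&` R) p by []; rewrite PR. Qed.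

Lemma closed_partition_separated M P R :
  closed_partition M P R -> separated P R.
Proof.
by case=> cP cR _ PR; rewrite /separated -(closure_id P).1 // -(closure_id R).1.
Qed.

Lemma separated_closedl A B : closed (A `|` B) -> separated A B -> closed A.
Proof.
move=> cAB [clAB _]; rewrite closure_id; apply/seteqP; split=> [|p clAp].
  exact: subset_closure.
have : (A `|` B) p.
  by rewrite (closure_id (A `|` B)).1 //; apply: closureS clAp => q; left.
by case=> // Bp; have : (closure A `&` B) p by []; rewrite clAB.
Qed.

Lemma connected_closedP M (x : X) : closed M -> M x ->
  connected M <-> forall P R, closed_partition M P R -> P x -> R = set0.
Proof.
move=> cM Mx; split=> [cnM P R pMPR Px|splitM].
  have [_ _ MPR _] := pMPR.
  have MP : M `<=` P.
    have MPR' : M `<=` P `|` R by rewrite MPR.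
    have [//|MR] := connected_subset (closed_partition_separated pMPR) MPR' cnM.
    by case: (closed_partition_disj pMPR Px (MR x Mx)).
  apply/seteqP; split=> // p Rp.
  by apply: (closed_partition_disj pMPR _ Rp); apply/MP; rewrite MPR; right.
apply/connectedP => E [En ME sep].
have pME : closed_partition M (E false) (E true).
  split=> //; last exact: separated_disjoint.
    by apply: separated_closedl sep; rewrite -ME.
  by apply: (separated_closedl (B := E false)); rewrite 1?separatedC // setUC -ME.
have : (E false `|` E true) x by rewrite -ME.
case=> [/(splitM _ _ pME) E1_0|/(splitM _ _ (closed_partitionC pME)) E0_0].
  by case: (En true); rewrite E1_0.
by case: (En false); rewrite E0_0.
Qed.

Lemma connected_closed_coverl M N C :
  connected [set: X] -> closed M -> closed N -> M `|` N = setT ->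
  M `&` N `<=` C -> C `<=` M -> connected C -> C !=set0 -> connected M.
Proof.
move=> cnX cM cN MN MNC CM cnC [c Cc].
apply/(connected_closedP cM (CM c Cc)) => P R pMPR Pc.
have [cP cR MPR PR] := pMPR.
have CP : C `<=` P.
  have CPR : C `<=` P `|` R by rewrite -MPR.
  have [//|CR] := connected_subset (closed_partition_separated pMPR) CPR cnC.
  by case: (closed_partition_disj pMPR Pc (CR c Cc)).
have pX : closed_partition setT (P `|` N) R.
  split=> //; first exact: closedU.
    apply/seteqP; split=> // p _; have : (M `|` N) p by rewrite MN.
    by rewrite MPR => -[[Pp|Rp]|Np]; [left; left|right|left; right].
  apply/seteqP; split=> // p [[Pp|Np] Rp]; first by rewrite -PR.
  by rewrite -PR; split=> //; apply/CP/MNC; split=> //; rewrite MPR; right.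
exact: ((connected_closedP closedT (I : setT c)).1 cnX _ _ pX (or_introl Pc)).
Qed.

End closed_partition.

Section boundary.
Variable X : topologicalType.
Implicit Types A U : set X.

Lemma interior_open_subset A U (x : X) : open U -> U x -> U `<=` A -> A° x.
Proof. by move=> oU Ux; rewrite (open_subsetE _ oU) => /(_ x Ux). Qed.

Lemma setU_closureC A : A `|` closure (~` A) = setT.
Proof.
apply/seteqP; split=> // p _.
by have [Ap|nAp] := pselect (A p); [left|right; exact: subset_closure].
Qed.

Lemma interior_closureC A : A° = ~` closure (~` A).
Proof. by rewrite -interiorC setCK. Qed.

Lemma closureC_neqT A : A° !=set0 -> closure (~` A) <> setT.
Proof. by rewrite interior_closureC => -[p nZp] ZT; apply: nZp; rewrite ZT. Qed.

Lemma null_aposyndetic_closureC A (x : X) :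
  null_aposyndetic x -> subcontinuum A -> A <> setT -> closure (~` A) x.
Proof.
move=> nx sA AT; apply: contrapT => nZx.
by apply: (nx A) => //; rewrite interior_closureC.
Qed.

Lemma subcontinuum_closed A :
  compact [set: X] -> closed A -> nondegenerate A -> connected A -> subcontinuum A.
Proof. by move=> cptX cA ndA cnA; split=> //; exact: subclosed_compact cA cptX _. Qed.

End boundary.

Section subcontinuum_complement.
Variables (X : topologicalType) (T : set X).
Hypotheses (cX : is_continuum X) (sT : subcontinuum T).

Let closed_T : closed T.
Proof. by case: cX sT => _ _ _ hX [_ cptT _]; exact: compact_closed. Qed.

Section partition_closureC.
Variables Z1 Z2 : set X.
Hypothesis pZ : closed_partition (closure (~` T)) Z1 Z2.

Lemma setU_partition_subcontinuum : subcontinuum (T `|` Z1).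
Proof.
have [cZ1 cZ2 Z12 _] := pZ.
case: cX sT => _ cptX cnX _ [[a [b [Ta [Tb ab]]]] _ cnT].
apply: subcontinuum_closed => //; first exact: closedU.
  by exists a, b; split; [left | split; [left |]].
apply: (connected_closed_coverl cnX (closedU closed_T cZ1) cZ2 _ _ _ cnT).
- by rewrite -setUA -Z12 setU_closureC.
- by move=> p [[//|Z1p] Z2p]; case: (closed_partition_disj pZ Z1p Z2p).
- by move=> p Tp; left.
- by exists a.
Qed.

Lemma setU_partition_neqT : Z2 !=set0 -> T `|` Z1 <> setT.
Proof.
have [cZ1 _ Z12 _] := pZ.
move=> [z Z2z] TZ1.
have Z2T : Z2 `<=` T.
  move=> p Z2p; have : (T `|` Z1) p by rewrite TZ1.
  by case=> // Z1p; case: (closed_partition_disj pZ Z1p Z2p).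
have ZZ1 : closure (~` T) `<=` Z1.
  rewrite [X in _ `<=` X](closure_id Z1).1 //; apply: closureS => p nTp.
  have : closure (~` T) p by exact: subset_closure.
  by rewrite Z12 => -[//|/Z2T].
by apply: (closed_partition_disj pZ _ Z2z); apply: ZZ1; rewrite Z12; right.
Qed.

Lemma setU_partition_interior (x : X) : ~ T x -> Z1 x -> (T `|` Z1)° x.
Proof.
have [_ cZ2 Z12 _] := pZ.
move=> nTx Z1x; apply: (@interior_open_subset _ _ (~` T `&` ~` Z2)).
- by apply: openI; exact: closed_openC.
- by split=> // /(closed_partition_disj pZ Z1x).
- move=> p [nTp nZ2p]; right.
  have : closure (~` T) p by exact: subset_closure.
  by rewrite Z12 => -[].
Qed.

End partition_closureC.

Lemma null_aposyndetic_connected_closureC (x : X) :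
  null_aposyndetic x -> ~ T x -> connected (closure (~` T)).
Proof.
move=> nx nTx; apply/(connected_closedP (@closed_closure _ _) (subset_closure nTx)).
move=> Z1 Z2 pZ Z1x; apply: contrapT => /eqP/set0P Z2n.
apply: (nx (T `|` Z1)).
- exact: setU_partition_subcontinuum pZ.
- exact: setU_partition_neqT pZ Z2n.
- exact: (setU_partition_interior pZ nTx Z1x).
Qed.

Lemma null_aposyndetic_in_subcontinuum (x : X) :
  T° !=set0 -> null_aposyndetic x -> T x.
Proof.
move=> Tn nx; apply: contrapT => nTx.
case: cX => _ cptX cnX _.
have Zx : closure (~` T) x by exact: subset_closure.
have [t [Zt Tt]] : closure (~` T) `&` T !=set0.
  apply: contrapT => /nonemptyPn ZT0.
  have pX : closed_partition setT (closure (~` T)) T.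
    by split=> //; [exact: closed_closure | rewrite setUC setU_closureC].
  have T0 := (connected_closedP closedT (I : setT x)).1 cnX _ _ pX Zx.
  by case: Tn => p /interior_subset; rewrite T0.
apply: (nx (closure (~` T))).
- apply: subcontinuum_closed => //; first exact: closed_closure.
    by exists x, t; split=> //; split=> // xt; apply: nTx; rewrite xt.
  exact: null_aposyndetic_connected_closureC nx nTx.
- exact: closureC_neqT.
- apply: (interior_open_subset (closed_openC closed_T) nTx).
  exact: subset_closure.
Qed.

End subcontinuum_complement.

Theorem mainTheorem17 (X : topologicalType) (T : set X) (x : X) :
  is_continuum X -> thick T -> null_aposyndetic x ->
  (closure T `&` closure (~` T)) x.
Proof.
move=> cX [sT TT Tn] nx; split.
  by apply: subset_closure; exact: (null_aposyndetic_in_subcontinuum cX sT Tn nx).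
exact: null_aposyndetic_closureC.
Qed.
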